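(* Let $Q$ be a commutative automorphic loop of nilpotency class $3$. Then for all $a,b,c,d\in Q$: \begin{align*} (ab,c,d)=&(a,c,d)(b,c,d)((a,c,d),a,b)((b,c,d),b,a)\\&\cdot((a,c,d),b,c)((b,c,d),a,c)((a,c,d),b,d)((b,c,d),a,d),\\ (a,b,cd)=&(a,b,c)(a,b,d)((a,b,c),c,d)((a,b,d),d,c)\\&\cdot((a,b,c),d,b)((a,b,d),c,b)((a,b,c),d,a)((a,b,d),c,a),\\ (a,bc,d)=&(a,b,d)(a,c,d)((a,b,d),b,c)((a,c,d),c,b)\\&\cdot((a,b,d),c,a)((a,c,d),b,a)((a,b,d),c,d)((a,c,d),b,d). \end{align*}
   Context: A loop is a set with a binary operation such that all left and right translations $L_a:b\mapsto ab$, $R_a:b\mapsto ba$ are bijections and there is a two-sided identity. The inner mapping group is the stabilizer of the identity in the group generated by all translations; $Q$ is automorphic if all inner mappings are automorphisms. The associator $(a,b,c)$ is defined by $(ab)c=(a(bc))(a,b,c)$; the notation $x\cdot y$ indicates lower priority of multiplication. The center $Z(Q)$ is the set of elements fixed by all inner mappings; $Z_0=1$, $Z_{i+1}(Q)$ is the preimage of $Z(Q/Z_i(Q))$, and $Q$ has nilpotency class $n$ if $Z_{n-1}(Q)\neq Q=Z_n(Q)$. In a commutative loop of nilpotency class $3$, all compounded associators (associators having an associator as one argument) are central. *)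

From mathcomp Require Import ssreflect ssrfun ssrbool.
From Stdlib Require Import ClassicalEpsilon.

Set Implicit Arguments.
Unset Strict Implicit.

Record loop := Loop {
  lcar :> Type;
  lmul : lcar -> lcar -> lcar;
  lone : lcar;
  lone_mul : forall x, lmul lone x = x;
  lmul_one : forall x, lmul x lone = x;
  lbijL : forall a, bijective (lmul a);
  lbijR : forall a, bijective (fun b => lmul b a)
}.

Arguments lmul {l}.
Notation "x ** y" := (lmul x y) (at level 40, left associativity).

Lemma bij_ex (T : Type) (f : T -> T) :
  bijective f -> exists g : T -> T, cancel f g /\ cancel g f.
Proof. by case=> g H1 H2; exists g. Qed.

Definition Ltr (Q : loop) (a : Q) : Q -> Q := fun b => a ** b.
Definition Rtr (Q : loop) (a : Q) : Q -> Q := fun b => b ** a.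

Definition ldiv (Q : loop) (a : Q) : Q -> Q :=
  proj1_sig (constructive_indefinite_description _ (bij_ex (lbijL a))).

(* associator: (ab)c = (a(bc)) (a,b,c) *)
Definition assoc (Q : loop) (a b c : Q) : Q :=
  ldiv (a ** (b ** c)) ((a ** b) ** c).

Inductive Mlt (Q : loop) : (Q -> Q) -> Prop :=
  | Mlt_L a : Mlt (Ltr a)
  | Mlt_R a : Mlt (Rtr a)
  | Mlt_id : Mlt id
  | Mlt_comp f g : Mlt f -> Mlt g -> Mlt (f \o g)
  | Mlt_inv f g : Mlt f -> cancel f g -> cancel g f -> Mlt g
  | Mlt_ext f g : Mlt f -> f =1 g -> Mlt g.

Definition inner (Q : loop) (f : Q -> Q) : Prop := Mlt f /\ f (lone Q) = lone Q.

Definition commutative_loop (Q : loop) : Prop := forall a b : Q, a ** b = b ** a.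

Definition automorphic (Q : loop) : Prop :=
  forall f, inner f -> forall x y : Q, f (x ** y) = f x ** f y.

(* Z_0 = 1; Z_{i+1} = preimage of Z(Q/Z_i), where
   Z(Q/Z_i) is the set of elements of Q/Z_i fixed by all inner mappings of
   Q/Z_i.  Inner mappings of Q/N are exactly the maps induced by inner
   mappings of Q, so x Z_i is central in Q/Z_i iff f(x) \in x Z_i for every
   inner mapping f of Q. *)
Fixpoint Zc (Q : loop) (i : nat) : Q -> Prop :=
  match i with
  | 0 => fun x => x = lone Q
  | S j => fun x => forall f, inner f -> exists n, Zc j n /\ f x = x ** n
  end.

Definition nilpotency_class (Q : loop) (n : nat) : Prop :=
  (exists x : Q, ~ Zc (n - 1) x) /\ (forall x : Q, Zc n x).

(* For u in Z_2 of a commutative automorphic loop, the inner mapping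
   R_{x,y} : t |-> (xy)\((tx)y) moves u by the central element (u,x,y);
   consequently (u,x,y) is central, multiplicative in each argument, and
   trivial when an associator sits in its second or third slot.  In class 3,
   R_{c,d} a = a n with n in Z_2, whence (a,c,d) = n (n,a,cd) lies in Z_2 too.
   Applying the automorphism R_{c,d} to ab and moving n and m = b\R_{c,d} b
   past a and b produces the correction terms of the first identity.  The
   other two follow from it by (x,y,z)(z,y,x) = 1 and
   (x,a,d) = (x,d,a)(a,x,d). *)
From mathcomp Require Import ssreflect ssrfun ssrbool.
From mathcomp Require Import eqtype ssrnat seq.
From Stdlib Require Import ClassicalEpsilon.

Section CommutativeAutomorphicLoop.
Variable Q : loop.
Hypothesis mulC : commutative_loop Q.
Hypothesis Q_automorphic : automorphic Q.

Local Notation one := (lone Q).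
Implicit Types a b c d k m n p q r s t u v w x y z : Q.

Lemma mulI x y z : x ** y = x ** z -> y = z.
Proof.
have [g gK _] := lbijL x.
by move=> E; rewrite -(gK y) E gK.
Qed.

Lemma ldiv_spec x : cancel (lmul x) (ldiv x) /\ cancel (ldiv x) (lmul x).
Proof. by rewrite /ldiv; case: constructive_indefinite_description. Qed.

Lemma ldivK x y : ldiv x (x ** y) = y.
Proof. by case: (ldiv_spec x) => ->. Qed.

Lemma mul_ldiv x y : x ** ldiv x y = y.
Proof. by case: (ldiv_spec x) => _ ->. Qed.

Lemma assocE a b c : (a ** b) ** c = (a ** (b ** c)) ** assoc a b c.
Proof. by rewrite /assoc mul_ldiv. Qed.

Lemma assoc_unique a b c t :
  (a ** b) ** c = (a ** (b ** c)) ** t -> assoc a b c = t.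
Proof. by move=> E; apply: (@mulI (a ** (b ** c))); rewrite -assocE. Qed.

(* The paper's R_{x,y}; in a commutative loop L_{xy} = R_{xy}. *)
Definition Rmap x y t : Q := ldiv (x ** y) ((t ** x) ** y).

Lemma Rmap_inner x y : inner (Rmap x y).
Proof.
split; last by rewrite /Rmap lone_mul -{2}(lmul_one (x ** y)) ldivK.
apply: (@Mlt_ext _ (ldiv (x ** y) \o (Rtr y \o Rtr x))) => //.
apply: Mlt_comp; last by apply: Mlt_comp; apply: Mlt_R.
apply: (@Mlt_inv _ (Ltr (x ** y))); first exact: Mlt_L.
  by move=> t; rewrite /Ltr ldivK.
by move=> t; rewrite /Ltr mul_ldiv.
Qed.

Lemma mul_Rmap x y t : (x ** y) ** Rmap x y t = (t ** x) ** y.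
Proof. exact: mul_ldiv. Qed.

Lemma RmapM x y s t : Rmap x y (s ** t) = Rmap x y s ** Rmap x y t.
Proof. exact: Q_automorphic (Rmap_inner x y) s t. Qed.

Definition central z := forall f, inner f -> f z = z.

Lemma Zc1_central z : Zc 1 z -> central z.
Proof. by move=> Zz f /Zz [n [/= -> ->]]; rewrite lmul_one. Qed.

Lemma central1 : central one.
Proof. by move=> f []. Qed.

Lemma centralM {z1 z2} : central z1 -> central z2 -> central (z1 ** z2).
Proof. by move=> C1 C2 f If; rewrite Q_automorphic // C1 // C2. Qed.

Section CentralElement.
Variable z : Q.
Hypothesis Cz : central z.

Lemma mulA_central_l x y : (z ** x) ** y = z ** (x ** y).
Proof. by rewrite -mul_Rmap (Cz _ (Rmap_inner x y)) mulC. Qed.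

Lemma mulA_central_r x y : (x ** y) ** z = x ** (y ** z).
Proof.
by rewrite (mulC _ z) (mulC x (y ** z)) (mulC y z) !mulA_central_l (mulC y).
Qed.

Lemma mulA_central_m x y : (x ** z) ** y = x ** (z ** y).
Proof. by rewrite (mulC x z) (mulC x (z ** y)) !mulA_central_l (mulC y). Qed.

Lemma mulAC_central x y : (x ** y) ** z = (x ** z) ** y.
Proof. by rewrite mulA_central_r mulA_central_m (mulC y). Qed.

Lemma assoc_central_l x y : assoc z x y = one.
Proof. by apply: assoc_unique; rewrite lmul_one mulA_central_l. Qed.

Lemma assoc_central_m x y : assoc x z y = one.
Proof. by apply: assoc_unique; rewrite lmul_one mulA_central_m. Qed.

Lemma assoc_central_r x y : assoc x y z = one.
Proof. by apply: assoc_unique; rewrite lmul_one mulA_central_r. Qed.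

End CentralElement.

Lemma mulACA_central u v {n m} : central n -> central m ->
  (u ** n) ** (v ** m) = (u ** v) ** (n ** m).
Proof.
move=> Cn Cm.
rewrite (mulA_central_m _ Cn) -(mulA_central_l _ Cn) (mulC n v) (mulA_central_m _ Cn).
by rewrite (mulA_central_r _ (centralM Cn Cm)).
Qed.

Definition central2 u := forall f, inner f -> exists2 n, central n & f u = u ** n.

Lemma Zc2_central2 u : Zc 2 u -> central2 u.
Proof. by move=> Zu f /Zu [n [/Zc1_central Cn E]]; exists n. Qed.

Lemma central_central2 {z} : central z -> central2 z.
Proof. by move=> Cz f If; exists one; rewrite ?lmul_one ?Cz //; apply: central1. Qed.

Lemma central2M {u v} : central2 u -> central2 v -> central2 (u ** v).
Proof.
move=> Zu Zv f If; have [n Cn Eu] := Zu f If; have [m Cm Ev] := Zv f If.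
by exists (n ** m); [apply: centralM | rewrite Q_automorphic // Eu Ev mulACA_central].
Qed.

Lemma Rmap_central2 {u} x y : central2 u ->
  central (assoc u x y) /\ Rmap x y u = u ** assoc u x y.
Proof.
move=> /(_ _ (Rmap_inner x y)) [n Cn E].
suff -> : assoc u x y = n by split.
apply: assoc_unique; rewrite -mul_Rmap E mulC (mulA_central_m _ Cn).
by rewrite (mulC n) -(mulA_central_r _ Cn).
Qed.

Lemma assoc_central {u} x y : central2 u -> central (assoc u x y).
Proof. by case/(Rmap_central2 x y). Qed.

Lemma Rmap_assoc {u} x y : central2 u -> Rmap x y u = u ** assoc u x y.
Proof. by case/(Rmap_central2 x y). Qed.

Lemma assocMl {u v} x y : central2 u -> central2 v ->
  assoc (u ** v) x y = assoc u x y ** assoc v x y.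
Proof.
move=> Zu Zv; apply: (@mulI (u ** v)).
rewrite -(Rmap_assoc x y (central2M Zu Zv)) RmapM.
by rewrite (Rmap_assoc x y Zu) (Rmap_assoc x y Zv) mulACA_central //; apply: assoc_central.
Qed.

Lemma assocMl_central {u z} x y : central2 u -> central z ->
  assoc (u ** z) x y = assoc u x y.
Proof.
move=> Zu Cz.
by rewrite (assocMl x y Zu (central_central2 Cz)) (assoc_central_l _ Cz) lmul_one.
Qed.

Lemma mulAC_central2 {u} x w : central2 u -> (x ** u) ** w = (x ** w) ** (u ** assoc u x w).
Proof.
move=> Zu; rewrite (mulC x) assocE (mulC u) mulA_central_r //.
exact: assoc_central.
Qed.

Definition morph (h : Q -> Q) := forall s t, h (s ** t) = h s ** h t.
Definition central_valued (h : Q -> Q) := forall t, central (h t).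

Section Intertwined.
Variables f g1 g2 : Q -> Q.
Hypotheses (If : inner f) (C1 : central_valued g1) (C2 : central_valued g2).
Hypothesis fg : forall t, f t ** g1 t = t ** g2 t.

Lemma morph_intertwined : morph g1 -> morph g2.
Proof.
move=> M1 s t; apply: (@mulI (s ** t)).
by rewrite -fg (Q_automorphic _ If) M1 -mulACA_central // !fg mulACA_central.
Qed.

Lemma morph_intertwined_inv : morph g2 -> morph g1.
Proof.
move=> M2 s t; apply: (@mulI (f (s ** t))).
rewrite fg M2 -(mulACA_central s t (C2 s) (C2 t)) -!fg.
by rewrite (mulACA_central _ _ (C1 s) (C1 t)) (Q_automorphic _ If).
Qed.

End Intertwined.

Lemma morph_assoc h p q r : central_valued h -> morph h -> h (assoc p q r) = one.
Proof.
move=> Ch Mh; apply: (@mulI (h (p ** (q ** r)))).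
by rewrite -Mh -assocE lmul_one !Mh mulA_central_r.
Qed.

(* Through [assoc_morph_r], this is what makes (v,x,(p,q,r)) trivial for v in
   Z_2, which Z_2 membership alone does not give. *)
Definition morph_null u := forall h, central_valued h -> morph h ->
  (forall z, central z -> h z = one) -> h u = one.

Lemma morph_null_assoc p q r : morph_null (assoc p q r).
Proof. by move=> h Ch Mh _; apply: morph_assoc. Qed.

Lemma morph_null_central z : central z -> morph_null z.
Proof. by move=> Cz h _ _; apply. Qed.

Lemma morph_nullM u v : morph_null u -> morph_null v -> morph_null (u ** v).
Proof. by move=> Nu Nv h Ch Mh h_central; rewrite Mh Nu // Nv // lmul_one. Qed.

Lemma morph_null_mulr {u z} : central z -> morph_null (u ** z) -> morph_null u.
Proof.
move=> Cz Nuz h Ch Mh h_central.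
by have := Nuz h Ch Mh h_central; rewrite Mh (h_central z Cz) lmul_one.
Qed.

Section Central2Associator.
Variable v : Q.
Hypothesis Zv : central2 v.

Lemma assoc_morph_r x : morph (assoc v x).
Proof.
apply: (@morph_intertwined_inv (Rmap x v) _ (fun=> one)) => //.
- exact: Rmap_inner.
- by move=> t; apply: assoc_central.
- by move=> t; apply: central1.
- move=> t; rewrite lmul_one; apply: (@mulI (x ** v)).
  rewrite -mulA_central_r ?mul_Rmap; last exact: assoc_central.
  by rewrite (mulC (t ** x) v) (mulC t x) (mulC x v) (assocE v x t).
- by move=> s t; rewrite lmul_one.
Qed.

Lemma Rmap_assoc_swap x t : Rmap v x t ** assoc v x t = t ** assoc v t x.
Proof.
apply: (@mulI (v ** x)).
rewrite -!mulA_central_r ?mul_Rmap; try exact: assoc_central.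
rewrite (mulC t v) (assocE v t x) (assocE v x t) (mulC x t).
by apply: mulAC_central; apply: assoc_central.
Qed.

Lemma assoc_morph_m x : morph (assoc v ^~ x).
Proof.
apply: (@morph_intertwined (Rmap v x) (assoc v x)).
- exact: Rmap_inner.
- by move=> t; apply: assoc_central.
- by move=> t; apply: assoc_central.
- exact: Rmap_assoc_swap.
- exact: assoc_morph_r.
Qed.

Lemma assocMm s t x : assoc v (s ** t) x = assoc v s x ** assoc v t x.
Proof. exact: assoc_morph_m. Qed.

Lemma assocMr x s t : assoc v x (s ** t) = assoc v x s ** assoc v x t.
Proof. exact: assoc_morph_r. Qed.

Lemma assoc_morph_null_r x {k} : morph_null k -> assoc v x k = one.
Proof.
move/(_ (assoc v x)); apply; [by move=> t; apply: assoc_central | exact: assoc_morph_r |].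
by move=> z Cz; apply: assoc_central_r.
Qed.

Lemma assoc_morph_null_m x {k} : morph_null k -> assoc v k x = one.
Proof.
move/(_ (assoc v ^~ x)); apply; [by move=> t; apply: assoc_central | exact: assoc_morph_m |].
by move=> z Cz; apply: assoc_central_m.
Qed.

End Central2Associator.

(* Tame elements associate freely with each other ([mulA_tame]); in class 3
   every associator is tame. *)
Definition tame u := central2 u /\ morph_null u.

Lemma tame_central {z} : central z -> tame z.
Proof. by move=> Cz; split; [apply: central_central2 | apply: morph_null_central]. Qed.

Lemma tame1 : tame one.
Proof. exact/tame_central/central1. Qed.

Lemma tameM {u v} : tame u -> tame v -> tame (u ** v).
Proof. by move=> [Zu Nu] [Zv Nv]; split; [apply: central2M | apply: morph_nullM]. Qed.

Lemma assoc_tame u v x : tame u -> central2 v -> assoc u v x = one.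
Proof.
move=> [Zu Nu] Zv; have := Rmap_assoc_swap _ Zv x u.
rewrite (Rmap_assoc v x Zu) (assoc_morph_null_r _ Zv x Nu).
rewrite (assoc_morph_null_m _ Zv x Nu) lmul_one.
by move=> E; apply: (@mulI u); rewrite E lmul_one.
Qed.

Lemma mulA_tame x {v u} : central2 v -> tame u -> (x ** v) ** u = x ** (v ** u).
Proof.
move=> Zv Tu.
have -> : x ** (v ** u) = ((x ** v) ** u) ** assoc u v x.
  by rewrite (mulC x) (mulC v) assocE (mulC _ u) (mulC x).
by rewrite assoc_tame ?lmul_one.
Qed.

Lemma mulCA_tame a b c : tame a -> tame b -> tame c -> a ** (b ** c) = b ** (a ** c).
Proof.
move=> Ta [Zb _] Tc.
by rewrite -mulA_tame // (mulC a) mulA_tame //; case: Ta.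
Qed.

Fixpoint prod_tame (f : nat -> Q) (l : seq nat) : Q :=
  if l is i :: l' then f i ** prod_tame f l' else one.

Section TameProducts.
Variable f : nat -> Q.
Hypothesis Tf : forall i, tame (f i).

Lemma tame_prod l : tame (prod_tame f l).
Proof. by elim: l => [|i l IH] /=; [apply: tame1 | apply: tameM]. Qed.

Lemma prod_tame_cat l1 l2 : prod_tame f (l1 ++ l2) = prod_tame f l1 ** prod_tame f l2.
Proof.
elim: l1 => [|i l IH] /=; first by rewrite lone_mul.
by rewrite IH mulA_tame //; [case: (tame_prod l) | apply: tame_prod].
Qed.

Lemma prod_tame_rem {l i} : i \in l -> prod_tame f l = f i ** prod_tame f (rem i l).
Proof.
elim: l => [|j l IH] //= li; case: eqP => [-> //|ne_ji].
rewrite in_cons in li; case/orP: li => [/eqP ji|li]; first by case: ne_ji.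
by rewrite IH //= mulCA_tame //; apply: tame_prod.
Qed.

Lemma perm_prod_tame l1 l2 : perm_eq l1 l2 -> prod_tame f l1 = prod_tame f l2.
Proof.
elim: l1 l2 => [|i l1 IH] l2 pl; first by case: l2 pl (perm_size pl).
have il2 : i \in l2 by rewrite -(perm_mem pl) mem_head.
rewrite (prod_tame_rem il2) /=; congr (_ ** _); apply: IH.
by rewrite -(perm_cons i) (perm_trans pl) // perm_to_rem.
Qed.

End TameProducts.

Lemma assoc_Rmap {x c d n} : central2 n -> Rmap c d x = x ** n ->
  assoc x c d = n ** assoc n x (c ** d).
Proof. by move=> Zn Rx; apply: assoc_unique; rewrite -mul_Rmap Rx mulC mulAC_central2. Qed.

Lemma Rmap_mul_tame {a b c d n m} : tame n -> tame m ->
  Rmap c d a = a ** n -> Rmap c d b = b ** m ->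
  Rmap c d (a ** b) = (a ** b) ** ((m ** assoc m b a) ** (n ** assoc n a b)).
Proof.
move=> Tn [Zm Nm] Ra Rb; have [Zn _] := Tn.
rewrite RmapM Ra Rb (mulAC_central2 a (b ** m) Zn) (mulC a (b ** m)).
rewrite (mulAC_central2 b a Zm) (mulC b a).
rewrite (assocMr _ Zn) (assoc_morph_null_r _ Zn a Nm) lmul_one.
apply: mulA_tame; first exact/central2M/central_central2/assoc_central.
exact: tameM Tn (tame_central (assoc_central a b Zn)).
Qed.

Inductive word := Letter of nat | Juxt of word & word.

Fixpoint eval_word (env : seq Q) (e : word) : Q :=
  match e with
  | Letter i => nth one env i
  | Juxt e1 e2 => eval_word env e1 ** eval_word env e2
  end.

Fixpoint letters (e : word) : seq nat :=
  match e with Letter i => [:: i] | Juxt e1 e2 => letters e1 ++ letters e2 end.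

Inductive all_tame : seq Q -> Prop :=
  | all_tame_nil : all_tame [::]
  | all_tame_cons x l : tame x -> all_tame l -> all_tame (x :: l).

Lemma all_tame_nth env : all_tame env -> forall i, tame (nth one env i).
Proof. by elim=> [|x l Tx _ IH] [|i] //=; apply: tame1. Qed.

Lemma eval_word_prod env e : all_tame env ->
  eval_word env e = prod_tame (nth one env) (letters e).
Proof.
move=> Tenv; elim: e => [i|e1 IH1 e2 IH2] /=; first by rewrite lmul_one.
by rewrite prod_tame_cat ?IH1 ?IH2 //; apply: all_tame_nth.
Qed.

Lemma eval_word_perm env e1 e2 : all_tame env ->
  perm_eq (letters e1) (letters e2) -> eval_word env e1 = eval_word env e2.
Proof.
move=> Tenv pe; rewrite !eval_word_prod //.
by apply: perm_prod_tame => //; apply: all_tame_nth.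
Qed.

Section Class3.
Hypothesis Q_Zc3 : forall x : Q, Zc 3 x.

Lemma Rmap_Zc3 x c d : exists2 n, tame n & Rmap c d x = x ** n.
Proof.
have [n [/Zc2_central2 Zn Rx]] := Q_Zc3 x _ (Rmap_inner c d).
exists n => //; split=> //.
apply: (morph_null_mulr (assoc_central x (c ** d) Zn)).
by rewrite -(assoc_Rmap Zn Rx); apply: morph_null_assoc.
Qed.

Lemma central2_assoc p q r : central2 (assoc p q r).
Proof.
have [n [Zn _] Rp] := Rmap_Zc3 p q r.
by rewrite (assoc_Rmap Zn Rp); apply/central2M/central_central2/assoc_central.
Qed.

Lemma tame_assoc p q r : tame (assoc p q r).
Proof. by split; [apply: central2_assoc | apply: morph_null_assoc]. Qed.

Lemma assoc_rev x y z : assoc x y z ** assoc z y x = one.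
Proof.
have := assocE z y x.
have -> : (z ** y) ** x = x ** (y ** z) by rewrite mulC (mulC z).
have -> : z ** (y ** x) = (x ** y) ** z by rewrite mulC (mulC y).
rewrite (assocE x y z) (mulA_tame _ (central2_assoc x y z) (tame_assoc z y x)) => E.
by apply: (@mulI (x ** (y ** z))); rewrite -E lmul_one.
Qed.

Lemma assoc_rotate x a d : assoc x a d = assoc x d a ** assoc a x d.
Proof.
have := assocE a x d.
rewrite (mulC a x) (assocE x a d) (mulC a (x ** d)) (assocE x d a) (mulC d a).
by rewrite (mulA_tame _ (central2_assoc x d a) (tame_assoc a x d)); apply: mulI.
Qed.

Lemma assoc_assoc_rev p q r x y :
  assoc (assoc p q r) x y ** assoc (assoc r q p) x y = one.
Proof.
rewrite -(assocMl x y (central2_assoc p q r) (central2_assoc r q p)) assoc_rev.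
exact/assoc_central_l/central1.
Qed.

Ltac word_mem x l :=
  match l with
  | nil => constr:(false)
  | cons x _ => constr:(true)
  | cons _ ?r => word_mem x r
  end.

Ltac word_atoms e l :=
  lazymatch e with
  | @lmul _ ?a ?b => let l1 := word_atoms a l in word_atoms b l1
  | _ => lazymatch word_mem e l with true => l | false => constr:(cons e l) end
  end.

Ltac word_index x l :=
  match l with
  | cons x _ => constr:(O)
  | cons _ ?r => let n := word_index x r in constr:(S n)
  end.

Ltac reify_word e l :=
  lazymatch e with
  | @lmul _ ?a ?b =>
      let e1 := reify_word a l in let e2 := reify_word b l in constr:(Juxt e1 e2)
  | _ => let n := word_index e l in constr:(Letter n)
  end.

(* Proves an equation between two products of the same multiset of
   associators by reflection on [word]s. *)
Ltac tame_ac :=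
  lazymatch goal with |- ?L = ?R =>
    let env := word_atoms R ltac:(word_atoms L (@nil Q)) in
    let e1 := reify_word L env in let e2 := reify_word R env in
    change (eval_word env e1 = eval_word env e2); apply: eval_word_perm;
    [ repeat (apply: all_tame_cons; [first [exact: tame_assoc | assumption]|]);
      exact: all_tame_nil
    | vm_compute; reflexivity ]
  end.

Lemma assocMl_expand a b c d :
  assoc (a ** b) c d =
    (assoc a c d ** assoc b c d ** assoc (assoc a c d) a b
       ** assoc (assoc b c d) b a)
    ** (assoc (assoc a c d) b c ** assoc (assoc b c d) a c
       ** assoc (assoc a c d) b d ** assoc (assoc b c d) a d).
Proof.
have [n Tn Ra] := Rmap_Zc3 a c d; have [m Tm Rb] := Rmap_Zc3 b c d.
have [[Zn _] [Zm _]] := (Tn, Tm).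
have Cn x y : central (assoc n x y) by apply: assoc_central.
have Cm x y : central (assoc m x y) by apply: assoc_central.
have Zmba : central2 (m ** assoc m b a) by apply/central2M/central_central2.
have Znab : central2 (n ** assoc n a b) by apply/central2M/central_central2.
rewrite (assoc_Rmap (central2M Zmba Znab) (Rmap_mul_tame Tn Tm Ra Rb)).
rewrite (assoc_Rmap Zn Ra) (assoc_Rmap Zm Rb) (assocMl _ _ Zmba Znab).
rewrite !(assocMl_central _ _ Zn (Cn _ _)) !(assocMl_central _ _ Zm (Cm _ _)).
rewrite !(assocMm _ Zn) !(assocMm _ Zm) !(assocMr _ Zn) !(assocMr _ Zm).
tame_ac.
Qed.

Lemma assocMr_expand a b c d :
  assoc a b (c ** d) =
    (assoc a b c ** assoc a b d ** assoc (assoc a b c) c d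
       ** assoc (assoc a b d) d c)
    ** (assoc (assoc a b c) d b ** assoc (assoc a b d) c b
       ** assoc (assoc a b c) d a ** assoc (assoc a b d) c a).
Proof.
apply: (@mulI (assoc (c ** d) b a)); rewrite mulC assoc_rev assocMl_expand.
transitivity ((assoc a b c ** assoc c b a) ** ((assoc a b d ** assoc d b a) **
  ((assoc (assoc a b c) c d ** assoc (assoc c b a) c d) **
  ((assoc (assoc a b d) d c ** assoc (assoc d b a) d c) **
  ((assoc (assoc a b c) d b ** assoc (assoc c b a) d b) **
  ((assoc (assoc a b d) c b ** assoc (assoc d b a) c b) **
  ((assoc (assoc a b c) d a ** assoc (assoc c b a) d a) **
   (assoc (assoc a b d) c a ** assoc (assoc d b a) c a)))))))).
  by rewrite !assoc_assoc_rev !assoc_rev !lmul_one.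
tame_ac.
Qed.

Lemma assocMm_expand a b c d :
  assoc a (b ** c) d =
    (assoc a b d ** assoc a c d ** assoc (assoc a b d) b c
       ** assoc (assoc a c d) c b)
    ** (assoc (assoc a b d) c a ** assoc (assoc a c d) b a
       ** assoc (assoc a b d) c d ** assoc (assoc a c d) b d).
Proof.
apply: (@mulI (assoc (b ** c) d a)).
rewrite -assoc_rotate assocMl_expand assocMl_expand (assoc_rotate b a d) (assoc_rotate c a d).
rewrite !(assocMl _ _ (central2_assoc b d a) (central2_assoc a b d)).
rewrite !(assocMl _ _ (central2_assoc c d a) (central2_assoc a c d)).
tame_ac.
Qed.

End Class3.

End CommutativeAutomorphicLoop.

Theorem proposition2p8 (Q : loop) (Hcomm : commutative_loop Q)
  (Haut : automorphic Q) (Hnil : nilpotency_class Q 3) :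
  forall a b c d : Q,
    assoc (a ** b) c d =
      (assoc a c d ** assoc b c d ** assoc (assoc a c d) a b
         ** assoc (assoc b c d) b a)
      ** (assoc (assoc a c d) b c ** assoc (assoc b c d) a c
         ** assoc (assoc a c d) b d ** assoc (assoc b c d) a d)
    /\
    assoc a b (c ** d) =
      (assoc a b c ** assoc a b d ** assoc (assoc a b c) c d
         ** assoc (assoc a b d) d c)
      ** (assoc (assoc a b c) d b ** assoc (assoc a b d) c b
         ** assoc (assoc a b c) d a ** assoc (assoc a b d) c a)
    /\
    assoc a (b ** c) d =
      (assoc a b d ** assoc a c d ** assoc (assoc a b d) b c
         ** assoc (assoc a c d) c b)
      ** (assoc (assoc a b d) c a ** assoc (assoc a c d) b a
         ** assoc (assoc a b d) c d ** assoc (assoc a c d) b d).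
Proof.
have [_ Zc3] := Hnil; move=> a b c d.
split; [|split].
- exact: (@assocMl_expand Q Hcomm Haut Zc3).
- exact: (@assocMr_expand Q Hcomm Haut Zc3).
- exact: (@assocMm_expand Q Hcomm Haut Zc3).
Qed.
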